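(* Let $(A,\boxdot,e)$ be a mosaic which is $\rho$-reversible for the endofunction $\rho:A\to A$. Then for every $x\in A$, $\rho(x)$ is the unique inverse of $x$ in $A$.
   Context: A multioperation on $A$ is a function $\boxdot:A\times A\to\wp(A)$. An element $e$ is neutral if $e\boxdot x=x\boxdot e=\{x\}$ for all $x\in A$. $(A,\boxdot)$ is $\rho$-reversible if for all $x,y,z\in A$, $z\in x\boxdot y$ implies both $x\in z\boxdot\rho(y)$ and $y\in\rho(x)\boxdot z$. A mosaic is a set with a multioperation having a neutral element and $\rho$-reversible for some endofunction $\rho$. An inverse of $x$ is an element $y\in A$ with $e\in(x\boxdot y)\cap(y\boxdot x)$. *)

(* A multioperation on A is A -> A -> (A -> Prop),
   i.e. a map into the powerset of A, with subsets represented as predicates. *)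

Definition multiop (A : Type) : Type := A -> A -> (A -> Prop).

Definition is_neutral {A : Type} (op : multiop A) (e : A) : Prop :=
  forall x z : A, (op e x z <-> z = x) /\ (op x e z <-> z = x).

Definition is_reversible {A : Type} (op : multiop A) (rho : A -> A) : Prop :=
  forall x y z : A, op x y z -> op z (rho y) x /\ op (rho x) z y.

Definition is_mosaic {A : Type} (op : multiop A) (e : A) : Prop :=
  is_neutral op e /\ exists rho : A -> A, is_reversible op rho.

Definition is_inverse {A : Type} (op : multiop A) (e x y : A) : Prop :=
  op x y e /\ op y x e.


(* Reversibility applied to [e ⊡ x ∋ x] and [x ⊡ e ∋ x] shows that [rho x] is
   a two-sided inverse of [x]; applied to [x ⊡ y ∋ e] it gives
   [rho x ⊡ e ∋ y], which forces [y = rho x] by neutrality of [e]. *)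

Section ReversibleWithNeutral.

Variables (A : Type) (op : multiop A) (e : A) (rho : A -> A).
Hypothesis neutral_e : is_neutral op e.
Hypothesis reversible_rho : is_reversible op rho.

Lemma neutral_mull (x : A) : op e x x.
Proof. now apply (proj1 (neutral_e x x)). Qed.

Lemma neutral_mulr (x : A) : op x e x.
Proof. now apply (proj2 (neutral_e x x)). Qed.

Lemma rho_right_inverse (x : A) : op x (rho x) e.
Proof. exact (proj1 (reversible_rho e x x (neutral_mull x))). Qed.

Lemma rho_left_inverse (x : A) : op (rho x) x e.
Proof. exact (proj2 (reversible_rho x e x (neutral_mulr x))). Qed.

Lemma is_inverse_rho (x : A) : is_inverse op e x (rho x).
Proof. split; [apply rho_right_inverse | apply rho_left_inverse]. Qed.

Lemma right_inverse_eq_rho (x y : A) : op x y e -> y = rho x.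
Proof.
  intro Hxy.
  apply (proj2 (neutral_e (rho x) y)).
  exact (proj2 (reversible_rho x y e Hxy)).
Qed.

End ReversibleWithNeutral.

Theorem mainTheorem20 (A : Type) (op : multiop A) (e : A) (rho : A -> A)
  (Hmos : is_mosaic op e) (Hrev : is_reversible op rho) :
  forall x : A, is_inverse op e x (rho x) /\
    (forall y : A, is_inverse op e x y -> y = rho x).
Proof.
  destruct Hmos as [Hneutral _].
  intro x; split.
  - now apply is_inverse_rho.
  - intros y [Hxy _].
    now apply right_inverse_eq_rho with (op := op) (e := e).
Qed.
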